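(* HyperPCTL$^*$ subsumes PCTL$^*$: for every PCTL$^*$ state formula $\Phi$ and every path variable $\pi$ there is a HyperPCTL$^*$ formula $\mathcal{T}(\Phi,\pi)$ such that for every DTMC $\mathcal{M}$ and every path assignment $V$, $$\mathcal{M}\models \Phi \iff (\mathcal{M},V)\models \mathcal{T}(\Phi,\pi).$$
   Context: A discrete-time Markov chain (DTMC) is $\mathcal{M}=(S,s_{\mathrm{init}},P,\mathsf{AP},L)$, where $S$ is a finite set of states, $s_{\mathrm{init}}\in S$ is the initial state, $P:S\times S\to[0,1]$ satisfies $\sum_{s'}P(s,s')=1$ for every $s$, $\mathsf{AP}$ is a set of atomic propositions, and $L:S\to 2^{\mathsf{AP}}$ is a labeling. A path is an infinite sequence $\sigma=s(0)s(1)\cdots$ with $P(s(i),s(i+1))\neq 0$ for all $i$; $\sigma^{(i)}=s(i)s(i+1)\cdots$ is its $i$-suffix; paths from a state carry the usual probability measure of the DTMC, and tuples of paths are drawn independently. PCTL$^*$: state formulas $\Phi ::= a \mid \neg\Phi\mid \Phi\wedge\Phi\mid \mathbb{P}^{J}(\varphi)$ and path formulas $\varphi::=\Phi\mid\neg\varphi\mid\varphi\wedge\varphi\mid \mathrm{X}\varphi\mid \varphi\,\mathrm{U}^{\le k}\varphi$, with $a\in\mathsf{AP}$, $J\subseteq[0,1]$ an interval with rational bounds, $k\in\mathbb{N}\cup\{\infty\}$. Semantics: $(\mathcal{M},s)\models a$ iff $a\in L(s)$; Boolean connectives as usual; $(\mathcal{M},s)\models\mathbb{P}^J(\varphi)$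 iff the probability that a random path from $s$ satisfies $\varphi$ lies in $J$; $(\mathcal{M},\sigma)\models\Phi$ iff $(\mathcal{M},\sigma(0))\models\Phi$; $(\mathcal{M},\sigma)\models \mathrm{X}\varphi$ iff $(\mathcal{M},\sigma^{(1)})\models\varphi$; $(\mathcal{M},\sigma)\models\varphi_1\mathrm{U}^{\le k}\varphi_2$ iff there is $i\le k$ with $(\mathcal{M},\sigma^{(i)})\models\varphi_2$ and $(\mathcal{M},\sigma^{(j)})\models\varphi_1$ for all $j<i$. $\mathcal{M}\models\Phi$ means $(\mathcal{M},s_{\mathrm{init}})\models\Phi$. HyperPCTL$^*$: with path variables $\pi$ from an infinite supply $\Pi$, formulas are $\varphi::= a^\pi\mid \varphi^\pi\mid\neg\varphi\mid\varphi\wedge\varphi\mid\mathrm{X}\varphi\mid\varphi\,\mathrm{U}^{\le k}\varphi\mid \rho\bowtie\rho$, $\rho::= f(\rho,\dots,\rho)\mid \mathbb{P}^{\underline\pi}(\varphi)\mid\mathbb{P}^{\underline\pi}(\rho)$, where $\bowtie\in\{<,>,=,\le,\ge\}$, $\underline\pi=(\pi_1,\dots,\pi_n)$ is a tuple of (fresh) path variables, $f$ is an $n$-ary elementary function (constants allowed). A path assignment is $V:\Pi\to\mathrm{Paths}(\mathcal{M})$ (by default paths start at $s_{\mathrm{init}}$); $V^{(i)}(\pi)=(V(\pi))^{(i)}$. Semantics: $(\mathcal{M},V)\models a^\pi$ iff $a\in L(V(\pi)(0))$; $(\mathcal{M},V)\models\varphi^\pi$ iff $\varphi$ holds when every free path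 variable of $\varphi$ is assigned $V(\pi)$; $\neg,\wedge$ as usual; $(\mathcal{M},V)\models\mathrm{X}\varphi$ iff $(\mathcal{M},V^{(1)})\models\varphi$; $(\mathcal{M},V)\models\varphi_1\mathrm{U}^{\le k}\varphi_2$ iff there is $i\le k$ with $(\mathcal{M},V^{(i)})\models\varphi_2$ and $(\mathcal{M},V^{(j)})\models\varphi_1$ for all $j<i$; $(\mathcal{M},V)\models\rho_1\bowtie\rho_2$ iff $[\![\rho_1]\!]_V\bowtie[\![\rho_2]\!]_V$; $[\![f(\rho_1,\dots)]\!]_V=f([\![\rho_1]\!]_V,\dots)$; $[\![\mathbb{P}^{(\pi_1,\dots,\pi_n)}(\varphi)]\!]_V$ is the probability that, for independently drawn random paths $\sigma_i$ starting at $V(\pi_i)(0)$, $(\mathcal{M},V[\pi_i\mapsto\sigma_i\ \forall i])\models\varphi$ (and analogously for $\mathbb{P}^{\underline\pi}(\rho)$). Derived operators $\mathrm{F},\mathrm{G},\vee,\Rightarrow,\mathrm{true}$ as usual. *)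

From HB Require Import structures.
From mathcomp Require Import all_boot all_order all_algebra.
From mathcomp Require Import boolp classical_sets reals constructive_ereal ereal
  topology normedtype sequences.

Set Implicit Arguments.
Unset Strict Implicit.
Unset Printing Implicit Defensive.

Import Order.TTheory GRing.Theory Num.Theory.
Local Open Scope classical_set_scope.
Local Open Scope ring_scope.

Record dtmc (R : realType) (AP : Type) := DTMC {
  state : finType;
  s_init : state;
  trans : state -> state -> R;
  trans_ge0 : forall s t, 0 <= trans s t;
  trans_sum1 : forall s, \sum_(t : state) trans s t = 1;
  label : state -> AP -> bool
}.
Arguments s_init {R AP} d.
Arguments trans {R AP} d _ _.
Arguments label {R AP} d _ _.

Section Paths.
Variables (R : realType) (AP : Type) (M : dtmc R AP).
Local Notation S := (state M).

Definition is_path (sigma : nat -> S) : Prop :=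
  forall i, trans M (sigma i) (sigma i.+1) != 0.

(* Cylinder set of the finite prefix w. *)
Definition cyl (w : seq S) : set (nat -> S) :=
  [set sigma | forall i, sigma i = nth (sigma i) w i].

Fixpoint word_prob (t : S) (rest : seq S) : R :=
  match rest with
  | [::] => 1
  | u :: r => trans M t u * word_prob u r
  end.

Definition cyl_prob (s : S) (w : seq S) : R :=
  match w with
  | [::] => 1
  | t :: r => (t == s)%:R * word_prob t r
  end.

(* Probability measure of n independently drawn paths started at st i:
   the (Caratheodory) outer measure generated by products of cylinders,
   with the product premeasure.  [None] stands for the empty rectangle. *)
Definition rect_mass n (st : 'I_n -> S) (w : option ('I_n -> seq S)) : R :=
  match w with
  | Some w => \prod_(i < n) cyl_prob (st i) (w i)
  | None => 0
  end.

Definition in_rect n (w : option ('I_n -> seq S)) (sigmas : 'I_n -> nat -> S)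
  : Prop :=
  match w with
  | Some w => forall i, cyl (w i) (sigmas i)
  | None => False
  end.

Definition tuple_prob n (st : 'I_n -> S) (E : set ('I_n -> nat -> S)) : R :=
  fine (ereal_inf [set x : \bar R | exists ws : nat -> option ('I_n -> seq S),
     (forall sigmas, E sigmas -> exists k, in_rect (ws k) sigmas) /\
     x = (\sum_(0 <= k <oo) (rect_mass st (ws k))%:E)%E]).

Definition path_prob (s : S) (E : set (nat -> S)) : R :=
  tuple_prob (n := 1) (fun _ => s) [set sigmas | E (sigmas ord0)].

End Paths.

Record itvQ := ItvQ { lo : rat; lo_closed : bool; hi : rat; hi_closed : bool }.

Definition in_itvQ (R : realType) (J : itvQ) (x : R) : Prop :=
  (if lo_closed J then ratr (lo J) <= x else ratr (lo J) < x) /\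
  (if hi_closed J then x <= ratr (hi J) else x < ratr (hi J)).

Definition itv_wf (J : itvQ) : Prop := (0 <= lo J) /\ (hi J <= 1).

Inductive sform (AP : Type) :=
  | SAtom of AP
  | SNot of sform AP
  | SAnd of sform AP & sform AP
  | SProb of itvQ & pform AP
with pform (AP : Type) :=
  | PState of sform AP
  | PNot of pform AP
  | PAnd of pform AP & pform AP
  | PNext of pform AP
  | PUntil of option nat & pform AP & pform AP.   (* None = infinity *)

Fixpoint sform_wf AP (f : sform AP) : Prop :=
  match f with
  | SAtom _ => True
  | SNot f => sform_wf f
  | SAnd f g => sform_wf f /\ sform_wf g
  | SProb J p => itv_wf J /\ pform_wf p
  end
with pform_wf AP (p : pform AP) : Prop :=
  match p with
  | PState f => sform_wf f
  | PNot p => pform_wf p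
  | PAnd p q => pform_wf p /\ pform_wf q
  | PNext p => pform_wf p
  | PUntil _ p q => pform_wf p /\ pform_wf q
  end.

Definition le_bound (i : nat) (k : option nat) : Prop :=
  match k with None => True | Some k => (i <= k)%N end.

Section PCTLSem.
Variables (R : realType) (AP : Type) (M : dtmc R AP).
Local Notation S := (state M).

Fixpoint sat_s (s : S) (f : sform AP) {struct f} : Prop :=
  match f with
  | SAtom a => label M s a
  | SNot f => ~ sat_s s f
  | SAnd f g => sat_s s f /\ sat_s s g
  | SProb J p => in_itvQ J (path_prob s [set sigma | sat_p sigma p])
  end
with sat_p (sigma : nat -> S) (p : pform AP) {struct p} : Prop :=
  match p with
  | PState f => sat_s (sigma 0%N) f
  | PNot p => ~ sat_p sigma p
  | PAnd p q => sat_p sigma p /\ sat_p sigma q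
  | PNext p => sat_p (fun t => sigma t.+1) p
  | PUntil k p q => exists i, le_bound i k /\
       sat_p (fun t => sigma (t + i)%N) q /\
       forall j, (j < i)%N -> sat_p (fun t => sigma (t + j)%N) p
  end.

Definition models (f : sform AP) : Prop := sat_s (s_init M) f.

End PCTLSem.

Inductive cmp := CLt | CGt | CEq | CLe | CGe.

Inductive hform (AP : Type) :=
  | HAtom of AP & nat
  | HRebind of hform AP & nat
  | HNot of hform AP
  | HAnd of hform AP & hform AP
  | HNext of hform AP
  | HUntil of option nat & hform AP & hform AP
  | HCmp of cmp & rform AP & rform AP
with rform (AP : Type) :=
  | RConst of rat
  | RAdd of rform AP & rform AP
  | RSub of rform AP & rform AP
  | RMul of rform AP & rform AP
  | RDiv of rform AP & rform AP
  | RProb of seq nat & hform AP.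

Definition cmp_sem (R : realType) (c : cmp) (x y : R) : Prop :=
  match c with
  | CLt => x < y | CGt => x > y | CEq => x = y | CLe => x <= y | CGe => x >= y
  end.

Section HyperSem.
Variables (R : realType) (AP : Type) (M : dtmc R AP).
Local Notation S := (state M).

Definition upd (V : nat -> nat -> S) (pis : seq nat)
  (sigmas : 'I_(size pis) -> nat -> S) : nat -> nat -> S :=
  fun p => match (insub (index p pis) : option 'I_(size pis)) with
           | Some i => sigmas i
           | None => V p
           end.
Arguments upd V pis sigmas : clear implicits.

Fixpoint sat_h (V : nat -> nat -> S) (f : hform AP) {struct f} : Prop :=
  match f with
  | HAtom a p => label M (V p 0%N) a
  | HRebind f p => sat_h (fun _ => V p) f
  | HNot f => ~ sat_h V f
  | HAnd f g => sat_h V f /\ sat_h V g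
  | HNext f => sat_h (fun p t => V p t.+1) f
  | HUntil k f g => exists i, le_bound i k /\
       sat_h (fun p t => V p (t + i)%N) g /\
       forall j, (j < i)%N -> sat_h (fun p t => V p (t + j)%N) f
  | HCmp c r1 r2 => cmp_sem c (eval_r V r1) (eval_r V r2)
  end
with eval_r (V : nat -> nat -> S) (r : rform AP) {struct r} : R :=
  match r with
  | RConst q => ratr q
  | RAdd a b => eval_r V a + eval_r V b
  | RSub a b => eval_r V a - eval_r V b
  | RMul a b => eval_r V a * eval_r V b
  | RDiv a b => eval_r V a / eval_r V b
  | RProb pis f =>
      tuple_prob (fun i : 'I_(size pis) => V (nth 0%N pis i) 0%N)
        [set sigmas | sat_h (upd V pis sigmas) f]
  end.

End HyperSem.

From mathcomp Require Import all_boot all_order all_algebra.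
From mathcomp Require Import reals.
From mathcomp Require Import boolp classical_sets.

Set Implicit Arguments.
Unset Strict Implicit.
Unset Printing Implicit Defensive.

(* T(Phi, pi) evaluates every subformula on the path bound to pi, and
   P^J(phi) becomes a bound check on P^(pi)(T(phi, pi)): resampling pi from its
   current first state gives exactly the PCTL* probability of phi there.  By
   mutual induction T(Phi, pi) then holds under V iff Phi holds at V(pi)(0),
   which is s_init. *)

Definition itv_hform AP (J : itvQ) (r : rform AP) : hform AP :=
  HAnd (HCmp (if lo_closed J then CLe else CLt) (RConst AP (lo J)) r)
       (HCmp (if hi_closed J then CLe else CLt) r (RConst AP (hi J))).

Fixpoint tr_sform AP (f : sform AP) (pi : nat) {struct f} : hform AP :=
  match f with
  | SAtom a => HAtom a pi
  | SNot f => HNot (tr_sform f pi)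
  | SAnd f g => HAnd (tr_sform f pi) (tr_sform g pi)
  | SProb J p => itv_hform J (RProb [:: pi] (tr_pform p pi))
  end
with tr_pform AP (p : pform AP) (pi : nat) {struct p} : hform AP :=
  match p with
  | PState f => tr_sform f pi
  | PNot p => HNot (tr_pform p pi)
  | PAnd p q => HAnd (tr_pform p pi) (tr_pform q pi)
  | PNext p => HNext (tr_pform p pi)
  | PUntil k p q => HUntil k (tr_pform p pi) (tr_pform q pi)
  end.

Scheme sform_mut_ind := Induction for sform Sort Prop
  with pform_mut_ind := Induction for pform Sort Prop.
Combined Scheme sform_pform_ind from sform_mut_ind, pform_mut_ind.

Section Translation.
Variables (R : realType) (AP : Type) (M : dtmc R AP).
Local Notation S := (state M).

Lemma sat_itv_hform (V : nat -> nat -> S) J (r : rform AP) :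
  sat_h V (itv_hform J r) <-> in_itvQ J (eval_r V r).
Proof. by rewrite /in_itvQ /=; case: (lo_closed J); case: (hi_closed J). Qed.

Lemma upd1 (V : nat -> nat -> S) p (sigmas : 'I_1 -> nat -> S) :
  upd V (pis := [:: p]) sigmas p = sigmas ord0.
Proof.
rewrite /upd /= eqxx; case: insubP => [i _ Hi|//].
by congr sigmas; apply: val_inj; rewrite Hi.
Qed.

Lemma eval_RProb1 (V : nat -> nat -> S) p (f : hform AP) (phi : set (nat -> S)) :
  (forall sigma, sat_h (upd V (pis := [:: p]) (fun _ => sigma)) f <-> phi sigma) ->
  eval_r V (RProb [:: p] f) = path_prob (V p 0%N) phi.
Proof.
move=> sat_f; rewrite /= /path_prob; congr tuple_prob.
  by apply: funext => i; rewrite ord1.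
apply: funext => sigmas; apply: propext => /=.
have -> : sigmas = (fun _ => sigmas ord0) by apply: funext => i; rewrite ord1.
exact: sat_f.
Qed.

Lemma sat_tr (pi : nat) :
  (forall (f : sform AP) (V : nat -> nat -> S),
      sat_h V (tr_sform f pi) <-> sat_s (V pi 0%N) f) /\
  (forall (p : pform AP) (V : nat -> nat -> S),
      sat_h V (tr_pform p pi) <-> sat_p (V pi) p).
Proof.
apply: sform_pform_ind.
- by [].
- by move=> f IHf V /=; rewrite IHf.
- by move=> f IHf g IHg V /=; rewrite IHf IHg.
- move=> J p IHp V; rewrite sat_itv_hform.
  rewrite (eval_RProb1 (phi := [set sigma | sat_p sigma p])) //.
  by move=> sigma; rewrite IHp upd1.
- by [].
- by move=> p IHp V /=; rewrite IHp.
- by move=> p IHp q IHq V /=; rewrite IHp IHq.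
- by move=> p IHp V /=; rewrite IHp.
- move=> k p IHp q IHq V /=.
  split=> -[i [ki [q_at_i p_before]]]; exists i; split=> //; split.
  + by move: q_at_i; rewrite IHq.
  + by move=> j /p_before; rewrite IHp.
  + by rewrite IHq.
  + by move=> j ji; rewrite IHp; apply: p_before.
Qed.

End Translation.

Theorem theorem1 (AP : Type) (Phi : sform AP) (pi : nat) :
  sform_wf Phi ->
  exists T : hform AP,
    forall (R : realType) (M : dtmc R AP) (V : nat -> nat -> state M),
      (forall p, V p 0%N = s_init M /\ is_path (V p)) ->
      (models M Phi <-> sat_h V T).
Proof.
move=> _; exists (tr_sform Phi pi) => R M V V_init.
by rewrite (proj1 (sat_tr M pi)) (proj1 (V_init pi)).
Qed.
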